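(* Let $d\geq 2$, let $\rho^s$ be a state on $H_d=\mathbb{C}^d$, and let $A$ and $B$ be auxiliary qudits ($d$-dimensional systems) each prepared in $|0\rangle\langle 0|$. Then there exists an incoherent operation $\Lambda$ on $H_d\otimes H_d\otimes H_d$ such that $\Lambda(\rho^s\otimes|0\rangle\langle 0|^A\otimes|0\rangle\langle 0|^B)$ is genuinely tripartite entangled if and only if $\rho^s$ is coherent.
   Context: Coherence is with respect to the computational basis of $H_d$ and the product computational basis of $H_d^{\otimes 3}$; a state is incoherent if it is diagonal in this basis and coherent otherwise. An incoherent operation is a completely positive trace-preserving map $\Lambda(\rho)=\sum_j K_j\rho K_j^\dagger$ whose Kraus operators map incoherent states to (unnormalized) incoherent states. A pure tripartite state is biseparable if it is a product state with respect to some bipartition of the three parties into two nonempty groups; a tripartite mixed state is genuinely tripartite entangled if it cannot be written as a convex combination of biseparable pure states (possibly with respect to different bipartitions). *)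

From HB Require Import structures.
From mathcomp Require Import all_boot all_order all_algebra.
From mathcomp Require Import mxtens.
Set Implicit Arguments. Unset Strict Implicit. Unset Printing Implicit Defensive.
Import Order.TTheory GRing.Theory Num.Theory.
Local Open Scope ring_scope.

Section Quantum.
Variable C : numClosedFieldType.

Definition adjmx m n (A : 'M[C]_(m, n)) : 'M[C]_(n, m) :=
  (map_mx Num.conj A)^T.

Definition density n (rho : 'M[C]_n) : Prop :=
  [/\ adjmx rho = rho,
      (forall v : 'cV[C]_n, 0 <= (adjmx v *m rho *m v) 0 0)
    & \tr rho = 1].

Definition incoherent_state n (rho : 'M[C]_n) : Prop :=
  density rho /\ is_diag_mx rho.

Definition coherent n (rho : 'M[C]_n) : Prop :=
  density rho /\ ~ incoherent_state rho.

Definition kraus_apply n k (K : 'I_k -> 'M[C]_n) (rho : 'M[C]_n) : 'M[C]_n :=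
  \sum_(j < k) K j *m rho *m adjmx (K j).

Definition incoherent_op n k (K : 'I_k -> 'M[C]_n) : Prop :=
  (\sum_(j < k) adjmx (K j) *m K j = 1%:M) /\
  (forall (j : 'I_k) (delta : 'M[C]_n), incoherent_state delta ->
      is_diag_mx (K j *m delta *m adjmx (K j))).

Definition proj0 d : 'M[C]_d :=
  \matrix_(i, j) ((nat_of_ord i == 0%N) && (nat_of_ord j == 0%N))%:R.

(* index of the product basis vector |i>|j>|k> in H_d (x) H_d (x) H_d,
   consistent with the Kronecker product (A *t B) *t C of mxtens *)
Definition idx3 d (i j k : 'I_d) : 'I_(d * d * d) :=
  mxtens_index (mxtens_index (i, j), k).

Definition product_A_BC d (psi : 'cV[C]_(d * d * d)) : Prop :=
  exists (u : 'cV[C]_d) (phi : 'cV[C]_(d * d)),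
    forall i j k, psi (idx3 i j k) 0 = u i 0 * phi (mxtens_index (j, k)) 0.
Definition product_B_AC d (psi : 'cV[C]_(d * d * d)) : Prop :=
  exists (u : 'cV[C]_d) (phi : 'cV[C]_(d * d)),
    forall i j k, psi (idx3 i j k) 0 = u j 0 * phi (mxtens_index (i, k)) 0.
Definition product_C_AB d (psi : 'cV[C]_(d * d * d)) : Prop :=
  exists (u : 'cV[C]_d) (phi : 'cV[C]_(d * d)),
    forall i j k, psi (idx3 i j k) 0 = u k 0 * phi (mxtens_index (i, j)) 0.

Definition biseparable_pure d (psi : 'cV[C]_(d * d * d)) : Prop :=
  adjmx psi *m psi = 1%:M /\
  [\/ product_A_BC psi, product_B_AC psi | product_C_AB psi].

Definition gme d (rho : 'M[C]_(d * d * d)) : Prop :=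
  density rho /\
  ~ exists (m : nat) (p : 'I_m -> C) (psi : 'I_m -> 'cV[C]_(d * d * d)),
      [/\ forall l, 0 <= p l,
          \sum_(l < m) p l = 1,
          forall l, biseparable_pure (psi l)
        & rho = \sum_(l < m) p l *: (psi l *m adjmx (psi l))].

End Quantum.

From HB Require Import structures.
From mathcomp Require Import all_boot all_order all_algebra.
From mathcomp Require Import mxtens ring.
Set Implicit Arguments. Unset Strict Implicit. Unset Printing Implicit Defensive.
Import Order.TTheory GRing.Theory Num.Theory.
Local Open Scope ring_scope.

(* Appending the two ancillas embeds rho isometrically along |a> |-> |a00>.
   If rho is diagonal, so is this input, incoherent Kraus operators keep the
   output diagonal, and a diagonal state is a mixture of product basis states.
   Conversely, the fan-out permutation |i,j,k> |-> |i,i+j,i+k> is incoherent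
   and carries the input to rho transported onto the GHZ vectors |aaa>.  Every
   pure component of a decomposition of that state vanishes off the GHZ
   vectors; if it is a product across some cut, then psi(aaa) psi(bbb) equals
   psi(x) psi(y) with x off the GHZ vectors, so no biseparable mixture can
   reproduce a nonzero coherence rho_ab. *)

Section Adjoint.
Variable C : numClosedFieldType.

Lemma adjmxE m n (A : 'M[C]_(m, n)) i j : adjmx A i j = (A j i)^*.
Proof. by rewrite !mxE. Qed.

Lemma adjmxM m n p (A : 'M[C]_(m, n)) (B : 'M[C]_(n, p)) :
  adjmx (A *m B) = adjmx B *m adjmx A.
Proof.
apply/matrixP=> i j; rewrite !mxE rmorph_sum; apply: eq_bigr => k _.
by rewrite !adjmxE rmorphM mulrC.
Qed.

Lemma adjmxK m n (A : 'M[C]_(m, n)) : adjmx (adjmx A) = A.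
Proof. by apply/matrixP=> i j; rewrite !adjmxE conjCK. Qed.

Lemma adjmx_delta m n (i : 'I_m) (j : 'I_n) :
  adjmx (delta_mx i j : 'M[C]_(m, n)) = delta_mx j i.
Proof. by apply/matrixP=> k l; rewrite adjmxE !mxE conjC_nat andbC. Qed.

End Adjoint.

Section BasisEmbedding.
Variable C : numClosedFieldType.

Definition embed_mx N d (f : 'I_d -> 'I_N) : 'M[C]_(N, d) :=
  \matrix_(x, a) (x == f a)%:R.

Definition push_mx N d (f : 'I_d -> 'I_N) (M : 'M[C]_d) : 'M[C]_N :=
  embed_mx f *m M *m adjmx (embed_mx f).

Variables (N d : nat) (f : 'I_d -> 'I_N).

Lemma adjmx_embed : adjmx (embed_mx f) = (embed_mx f)^T.
Proof. by apply/matrixP=> a x; rewrite adjmxE !mxE conjC_nat. Qed.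

Lemma mulmx_embedE p (M : 'M[C]_(p, N)) c a : (M *m embed_mx f) c a = M c (f a).
Proof.
rewrite mxE (bigD1 (f a)) //= mxE eqxx mulr1 big1 ?addr0 // => x xf.
by rewrite mxE (negbTE xf) mulr0.
Qed.

Lemma embed_mulmxE_out p (M : 'M[C]_(d, p)) x c :
  x \notin codom f -> (embed_mx f *m M) x c = 0.
Proof.
move=> x_out; rewrite mxE big1 // => a _; rewrite mxE.
have /negbTE-> : x != f a by apply: contraNneq x_out => ->; apply: codom_f.
by rewrite mul0r.
Qed.

Lemma embed_mxM N' (g : 'I_N -> 'I_N') :
  embed_mx g *m embed_mx f = embed_mx (g \o f).
Proof. by apply/matrixP=> x a; rewrite mulmx_embedE !mxE. Qed.

Lemma push_mx_comp N' (g : 'I_N -> 'I_N') (M : 'M[C]_d) :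
  push_mx g (push_mx f M) = push_mx (g \o f) M.
Proof. by rewrite /push_mx -embed_mxM adjmxM !mulmxA. Qed.

Lemma eq_push_mx (f' : 'I_d -> 'I_N) (M : 'M[C]_d) :
  f =1 f' -> push_mx f M = push_mx f' M.
Proof.
move=> ff'; suff E : embed_mx f = embed_mx f' by rewrite /push_mx E.
by apply/matrixP=> x a; rewrite !mxE ff'.
Qed.

Lemma push_mx_trE (M : 'M[C]_d) x y :
  push_mx f M x y = (embed_mx f *m (embed_mx f *m M)^T) y x.
Proof.
have -> : embed_mx f *m (embed_mx f *m M)^T = (push_mx f M)^T.
  by rewrite /push_mx adjmx_embed [RHS]trmx_mul trmxK.
by rewrite [RHS]mxE.
Qed.

Lemma push_mx_outl (M : 'M[C]_d) x y : x \notin codom f -> push_mx f M x y = 0.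
Proof.
by move=> x_out; rewrite mxE big1 // => z _; rewrite embed_mulmxE_out ?mul0r.
Qed.

Lemma push_mx_outr (M : 'M[C]_d) x y : y \notin codom f -> push_mx f M x y = 0.
Proof. by move=> y_out; rewrite push_mx_trE embed_mulmxE_out. Qed.

Hypothesis f_inj : injective f.

Lemma embed_mulmxE p (M : 'M[C]_(d, p)) a c : (embed_mx f *m M) (f a) c = M a c.
Proof.
rewrite mxE (bigD1 a) //= mxE eqxx mul1r big1 ?addr0 // => b ba.
by rewrite mxE (inj_eq f_inj) eq_sym (negbTE ba) mul0r.
Qed.

Lemma embed_mx_isometry : adjmx (embed_mx f) *m embed_mx f = 1%:M.
Proof.
by apply/matrixP=> a b; rewrite mulmx_embedE adjmx_embed !mxE (inj_eq f_inj) eq_sym.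
Qed.

Lemma push_mxE (M : 'M[C]_d) a b : push_mx f M (f a) (f b) = M a b.
Proof. by rewrite push_mx_trE embed_mulmxE mxE embed_mulmxE. Qed.

Lemma push_mx_diag (M : 'M[C]_d) : is_diag_mx M -> is_diag_mx (push_mx f M).
Proof.
move=> /is_diag_mxP M_diag; apply/is_diag_mxP => x y.
have [/codomP[a ->]|x_out _] := boolP (x \in codom f); last exact: push_mx_outl.
have [/codomP[b ->]|y_out _] := boolP (y \in codom f); last exact: push_mx_outr.
by move=> fab; rewrite push_mxE M_diag //; apply: contraNneq fab => /val_inj->.
Qed.

Lemma density_push_mx (M : 'M[C]_d) : density M -> density (push_mx f M).
Proof.
move=> [M_herm M_psd M_tr]; split.
- by rewrite /push_mx !adjmxM adjmxK M_herm mulmxA.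
- move=> v; have -> : adjmx v *m push_mx f M *m v =
      adjmx (adjmx (embed_mx f) *m v) *m M *m (adjmx (embed_mx f) *m v).
    by rewrite adjmxM adjmxK !mulmxA.
  exact: M_psd.
- by rewrite mxtrace_mulC mulmxA embed_mx_isometry mul1mx.
Qed.

End BasisEmbedding.

Section IncoherentOperations.
Variable C : numClosedFieldType.

Lemma is_diag_mx_sum n k (F : 'I_k -> 'M[C]_n) :
  (forall j, is_diag_mx (F j)) -> is_diag_mx (\sum_(j < k) F j).
Proof.
move=> F_diag; apply/is_diag_mxP => x y xy; rewrite summxE big1 // => j _.
by move/is_diag_mxP: (F_diag j) => ->.
Qed.

Lemma kraus_apply_diag n k (K : 'I_k -> 'M[C]_n) (delta : 'M[C]_n) :
  incoherent_op K -> incoherent_state delta -> is_diag_mx (kraus_apply K delta).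
Proof.
by move=> [_ K_incoh] delta_incoh; apply: is_diag_mx_sum => j; apply: K_incoh.
Qed.

Lemma incoherent_op_embed n (f : 'I_n -> 'I_n) :
  injective f -> incoherent_op (fun _ : 'I_1 => embed_mx C f).
Proof.
move=> f_inj; split; first by rewrite big_ord1 embed_mx_isometry.
by move=> _ delta [_ /(push_mx_diag f_inj)].
Qed.

Lemma coherent_offdiag n (rho : 'M[C]_n) :
  coherent rho -> exists a b, a != b /\ rho a b != 0.
Proof.
move=> [rho_dens not_incoh].
have : ~~ is_diag_mx rho by apply/negP => rho_diag; apply: not_incoh.
rewrite negb_forall => /existsP[a]; rewrite negb_forall => /existsP[b].
by rewrite negb_imply => /andP[ab rho_ab]; exists a, b.
Qed.

End IncoherentOperations.

Section ProductBasis.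
Variable C : numClosedFieldType.

Lemma idx3_eq d (i j k i' j' k' : 'I_d) :
  (idx3 i j k == idx3 i' j' k') = [&& i == i', j == j' & k == k'].
Proof.
by rewrite /idx3 !(can_eq (@mxtens_indexK _ _), xpair_eqE) andbA.
Qed.

Lemma idx3P d (x : 'I_(d * d * d)) : exists i j k, x = idx3 i j k.
Proof.
by case: (mxtens_indexP x) => ij k; case: (mxtens_indexP ij) => i j; exists i, j, k.
Qed.

Definition ghz_idx d (c : 'I_d) : 'I_(d * d * d) := idx3 c c c.

Lemma ghz_idx_inj d : injective (@ghz_idx d).
Proof. by move=> a b /eqP; rewrite idx3_eq => /and3P[/eqP]. Qed.

Lemma ghz_idx_codom d (i j k : 'I_d) :
  (idx3 i j k \in codom (@ghz_idx d)) = (i == j) && (i == k).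
Proof.
apply/codomP/andP => [[c /eqP]|[/eqP<- /eqP<-]]; last by exists i.
by rewrite idx3_eq => /and3P[/eqP-> /eqP-> /eqP->].
Qed.

Lemma proj0_delta n : proj0 C n.+1 = delta_mx 0 0.
Proof. by apply/matrixP=> i j; rewrite !mxE. Qed.

Lemma tens_delta_mx m n (A : 'M[C]_m) (j0 : 'I_n) :
  A *t delta_mx j0 j0 = push_mx (fun i => mxtens_index (i, j0)) A.
Proof.
set f := fun i => mxtens_index (i, j0).
have f_inj : injective f by move=> a b /(can_inj (@mxtens_indexK _ _)) [].
have codom_f i j : (mxtens_index (i, j) \in codom f) = (j == j0).
  apply/codomP/eqP => [[a /(can_inj (@mxtens_indexK _ _)) [_ ->]]|->] //.
  by exists i.
apply/matrixP=> x y.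
case: (mxtens_indexP x) => i j; case: (mxtens_indexP y) => i' j'.
rewrite tensmxE mxE.
have [-> | j_out] := eqVneq j j0; last first.
  by rewrite push_mx_outl ?codom_f ?j_out // andFb mulr0.
have [-> | j'_out] := eqVneq j' j0; last first.
  by rewrite push_mx_outr ?codom_f ?j'_out // andbF mulr0.
by rewrite (push_mxE f_inj) mulr1.
Qed.

Lemma tens_proj0_proj0 n (rho : 'M[C]_n.+1) :
  rho *t proj0 C n.+1 *t proj0 C n.+1 = push_mx (fun a => idx3 a 0 0) rho.
Proof. by rewrite proj0_delta !tens_delta_mx push_mx_comp. Qed.

Definition fanout n (x : 'I_(n.+1 * n.+1 * n.+1)) : 'I_(n.+1 * n.+1 * n.+1) :=
  let: (ij, k) := mxtens_unindex x in
  let: (i, j) := mxtens_unindex ij in idx3 i (i + j) (i + k).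

Lemma fanoutE n (i j k : 'I_n.+1) : fanout (idx3 i j k) = idx3 i (i + j) (i + k).
Proof. by rewrite /fanout /idx3 !mxtens_indexK. Qed.

Lemma fanout_inj n : injective (@fanout n).
Proof.
move=> x y; have [i [j [k ->]]] := idx3P x; have [i' [j' [k' ->]]] := idx3P y.
rewrite !fanoutE => /eqP; rewrite !idx3_eq => /and3P[/eqP ii' /eqP jj' /eqP kk'].
by move: ii' jj' kk' => <- /addrI-> /addrI->.
Qed.

Lemma fanout_ghz n : @fanout n \o (fun a : 'I_n.+1 => idx3 a 0 0) =1 @ghz_idx n.+1.
Proof. by move=> a; rewrite /= fanoutE !addr0. Qed.

End ProductBasis.

Section Separability.
Variable C : numClosedFieldType.

Lemma mixtureE N m (p : 'I_m -> C) (psi : 'I_m -> 'cV[C]_N) x y :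
  (\sum_(l < m) p l *: (psi l *m adjmx (psi l))) x y =
  \sum_(l < m) p l * (psi l x 0 * (psi l y 0)^*).
Proof. by rewrite summxE; apply: eq_bigr => l _; rewrite !mxE big_ord1 adjmxE. Qed.

Lemma mixture_support N m (p : 'I_m -> C) (psi : 'I_m -> 'cV[C]_N) x l :
  (forall l', 0 <= p l') ->
  (\sum_(l' < m) p l' *: (psi l' *m adjmx (psi l'))) x x = 0 ->
  p l != 0 -> psi l x 0 = 0.
Proof.
rewrite mixtureE => p_ge0 sum0 pl.
have term_ge0 l' : true -> 0 <= p l' * (psi l' x 0 * (psi l' x 0)^*).
  by rewrite -normCK mulr_ge0 ?exprn_ge0.
move/eqP: (psumr_eq0P term_ge0 sum0 (i := l) isT).
by rewrite -normCK mulf_eq0 (negbTE pl) sqrf_eq0 normr_eq0 => /eqP.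
Qed.

Lemma basis_biseparable d (l : 'I_(d * d * d)) :
  biseparable_pure (delta_mx l 0 : 'cV[C]_(d * d * d)).
Proof.
split.
  by rewrite adjmx_delta mul_delta_mx; apply/matrixP=> i j; rewrite !ord1 !mxE.
have [i0 [j0 [k0 ->]]] := idx3P l.
constructor 1; exists (delta_mx i0 0), (delta_mx (mxtens_index (j0, k0)) 0) => i j k.
rewrite !mxE !eqxx !andbT idx3_eq (can_eq (@mxtens_indexK _ _)) xpair_eqE.
by rewrite -natrM mulnb.
Qed.

Lemma diag_density_not_gme d (S : 'M[C]_(d * d * d)) :
  density S -> is_diag_mx S -> ~ gme S.
Proof.
move=> [_ S_psd S_tr] /is_diag_mxP S_diag [_]; apply.
exists (d * d * d)%N, (fun l => S l l), (fun l => delta_mx l 0); split.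
- by move=> l; have := S_psd (delta_mx l 0); rewrite adjmx_delta -rowE -colE !mxE.
- exact: S_tr.
- exact: basis_biseparable.
have S_diagE : S = diag_mx (\row_l S l l).
  apply/matrixP=> x y; rewrite !mxE.
  have [->|xy] := eqVneq x y; first by rewrite mulr1n.
  by rewrite mulr0n S_diag //; apply: contraNneq xy => /val_inj.
rewrite {1}S_diagE diag_mx_sum_delta; apply: eq_bigr => l _.
by rewrite adjmx_delta mul_delta_mx mxE.
Qed.

Lemma ghz_supported_product d (psi : 'cV[C]_(d * d * d)) (a b : 'I_d) :
  a != b -> (forall x, x \notin codom (@ghz_idx d) -> psi x 0 = 0) ->
  [\/ product_A_BC psi, product_B_AC psi | product_C_AB psi] ->
  psi (ghz_idx a) 0 * psi (ghz_idx b) 0 = 0.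
Proof.
(* Swapping the entries of the one-party side of the cut between |aaa> and
   |bbb> leaves the product psi(aaa) psi(bbb) unchanged. *)
move=> ab psi_supp psi_prod; have ba : b != a by rewrite eq_sym.
have [x x_out [y ->]] : exists2 x, x \notin codom (@ghz_idx d) &
    exists y, psi (ghz_idx a) 0 * psi (ghz_idx b) 0 = psi x 0 * psi y 0.
  case: psi_prod => -[u [phi psiE]].
  - exists (idx3 a b b); first by rewrite ghz_idx_codom (negbTE ab).
    by exists (idx3 b a a); rewrite !psiE; ring.
  - exists (idx3 b a b); first by rewrite ghz_idx_codom (negbTE ba).
    by exists (idx3 a b a); rewrite !psiE; ring.
  - exists (idx3 b b a); first by rewrite ghz_idx_codom (negbTE ba) andbF.
    by exists (idx3 a a b); rewrite !psiE; ring.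
by rewrite psi_supp ?mul0r.
Qed.

Lemma ghz_state_gme d (rho : 'M[C]_d) (a b : 'I_d) :
  density rho -> a != b -> rho a b != 0 -> gme (push_mx (@ghz_idx d) rho).
Proof.
move=> rho_dens ab rho_ab; split; first exact: (density_push_mx (@ghz_idx_inj d)).
move=> [m [p [psi [p_ge0 _ psi_bisep sigmaE]]]].
have term0 l : p l * (psi l (ghz_idx a) 0 * (psi l (ghz_idx b) 0)^*) = 0.
  have [->|pl] := eqVneq (p l) 0; first by rewrite mul0r.
  have psi_supp x : x \notin codom (@ghz_idx d) -> psi l x 0 = 0.
    by move=> x_out; apply: (mixture_support p_ge0 _ pl); rewrite -sigmaE push_mx_outl.
  have /eqP := ghz_supported_product ab psi_supp (psi_bisep l).2.
  by rewrite mulf_eq0 => /orP[]/eqP->; rewrite ?mul0r ?conjC0 ?mulr0.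
move/eqP: rho_ab; apply.
by rewrite -(push_mxE (@ghz_idx_inj d)) sigmaE mixtureE big1.
Qed.

End Separability.

Theorem theorem4 (C : numClosedFieldType) (d : nat) (hd : (2 <= d)%N)
    (rho : 'M[C]_d) :
  density rho ->
  ((exists (k : nat) (K : 'I_k -> 'M[C]_(d * d * d)),
      incoherent_op K /\ gme (kraus_apply K (rho *t proj0 C d *t proj0 C d)))
   <-> coherent rho).
Proof.
move=> rho_dens; case: d hd rho rho_dens => [|[|n]] // _ rho rho_dens.
have input_inj : injective (fun a : 'I_n.+2 => idx3 a 0 0).
  by move=> a b /eqP; rewrite idx3_eq => /and3P[/eqP].
rewrite tens_proj0_proj0; split.
- move=> [k [K [K_incoh [out_dens not_bisep]]]]; split=> // -[_ rho_diag].
  apply: (diag_density_not_gme out_dens) (conj out_dens not_bisep).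
  apply: kraus_apply_diag K_incoh _; split.
  + exact: (density_push_mx input_inj rho_dens).
  + exact: (push_mx_diag input_inj rho_diag).
- move=> /coherent_offdiag[a [b [ab rho_ab]]].
  exists 1%N, (fun=> embed_mx C (@fanout n.+1)); split.
    exact/incoherent_op_embed/fanout_inj.
  rewrite /kraus_apply big_ord1 -/(push_mx _ _) push_mx_comp.
  rewrite (eq_push_mx _ (@fanout_ghz n.+1)).
  exact: ghz_state_gme rho_dens ab rho_ab.
Qed.
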